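(* Let $m^*$ be the exact model of the environment, fix a base policy $\pi^b$, and let $\bar m,\bar{\bar m}\in\mathcal{M}$. Suppose $\bar m$ is a PCM or a PRM of $m^*$ with respect to $\bar\Pi=\{\pi_{\bar m}^r,\pi_{\bar m}^{ce}\}$ and $J$, and $\bar{\bar m}$ is a performance-minimizing model (PNM) of $m^*$ with respect to $\bar{\bar\Pi}=\{\pi_{\bar{\bar m}}^r,\pi_{\bar{\bar m}}^{ce}\}$ and $J$. Then $J_{m^*}^{\pi_{\bar m}^r}\ge J_{m^*}^{\pi_{\bar{\bar m}}^{ce}}$.
   Context: Fix finite sets $\mathcal{S}$ (states) and $\mathcal{A}$ (actions) and a discount factor $\gamma\in[0,1)$. A model is a triple $m=(p,r,d)$ with transition kernel $p:\mathcal{S}\times\mathcal{A}\times\mathcal{S}\to[0,1]$, reward function $r:\mathcal{S}\times\mathcal{A}\times\mathcal{S}\to\mathbb{R}$ and initial state distribution $d$ on $\mathcal{S}$; $\mathcal{M}$ is the set of all such models, and $m^*\in\mathcal{M}$ denotes the exact model of the environment. A policy is a map $\pi:\mathcal{S}\times\mathcal{A}\to[0,1]$ giving a distribution over actions at each state; $\mathbb{\Pi}$ is the set of all policies. For $m=(p,r,d)$ and $\pi\in\mathbb{\Pi}$, the performance is $J_m^\pi=\mathbb{E}_{\pi,p}[\sum_{t=0}^\infty\gamma^t r(S_t,A_t,S_{t+1})\mid S_0\sim d]$. Given the base policy $\pi^b$ and a model $m$, the rollout policy $\pi_m^r$ is the policy obtained by one step of policy iteration on $\pi^b$ in $m$ (policy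 evaluation of $\pi^b$ in $m$ followed by greedy policy improvement), and the certainty-equivalence policy $\pi_m^{ce}$ is the policy obtained by running policy iteration or value iteration to convergence in $m$ starting from $\pi^b$ (an optimal policy of $m$). Given $\Pi\subseteq\mathbb{\Pi}$: $m$ is a PCM of $m^*$ w.r.t. $\Pi$ and $J$ if for all $\pi^i,\pi^j\in\Pi$, $J_m^{\pi^i}\ge J_m^{\pi^j}$ implies $J_{m^*}^{\pi^i}\le J_{m^*}^{\pi^j}$; $m$ is a PRM of $m^*$ w.r.t. $\Pi$ and $J$ if for all $\pi^i,\pi^j\in\Pi$, $J_m^{\pi^i}\ge J_m^{\pi^j}$ implies $J_{m^*}^{\pi^i}\ge J_{m^*}^{\pi^j}$; $m$ is a PNM of $m^*$ w.r.t. $\Pi$ and $J$ if $m$ is a PCM of $m^*$ w.r.t. $\Pi$ and $J$ and every optimal policy $\pi_m^*$ of $m$ that belongs to $\Pi$ satisfies $J_{m^*}^{\pi_m^*}=\min_{\pi\in\mathbb{\Pi}}J_{m^*}^{\pi}$. *)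

From mathcomp Require Import all_boot all_order all_algebra.
From mathcomp Require Import all_classical all_reals all_analysis.
Set Implicit Arguments. Unset Strict Implicit. Unset Printing Implicit Defensive.
Import Order.TTheory GRing.Theory Num.Theory.
Import numFieldNormedType.Exports.
Local Open Scope ring_scope.

Section MDP.
Variables (R : realType) (S A : finType).

Record model := Model {
  mp : S -> A -> S -> R;
  mr : S -> A -> S -> R;
  md : S -> R              (* initial state distribution *)
}.

Definition distribution (mu : S -> R) : Prop :=
  (forall s, 0 <= mu s) /\ \sum_(s : S) mu s = 1.

Definition valid_model (m : model) : Prop :=
  (forall s a, distribution (mp m s a)) /\ distribution (md m).

Definition policy := S -> A -> R.
Definition valid_policy (pi : policy) : Prop :=
  forall s, (forall a, 0 <= pi s a) /\ \sum_(a : A) pi s a = 1.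

Fixpoint state_dist (p : S -> A -> S -> R) (pi : policy) (d : S -> R) (t : nat)
  : S -> R :=
  match t with
  | 0 => d
  | t'.+1 => fun s' =>
      \sum_(s : S) \sum_(a : A) state_dist p pi d t' s * pi s a * p s a s'
  end.

Definition exp_reward (p r : S -> A -> S -> R) (pi : policy) (d : S -> R)
  (t : nat) : R :=
  \sum_(s : S) \sum_(a : A) \sum_(s' : S)
    state_dist p pi d t s * pi s a * p s a s' * r s a s'.

Definition perf_from (gamma : R) (p r : S -> A -> S -> R) (d : S -> R)
  (pi : policy) : R :=
  limn (series (fun t => gamma ^+ t * exp_reward p r pi d t)).

Definition J (gamma : R) (m : model) (pi : policy) : R :=
  perf_from gamma (mp m) (mr m) (md m) pi.

Definition point_dist (s0 : S) : S -> R := fun s => if s == s0 then 1 else 0.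

Definition V (gamma : R) (m : model) (pi : policy) (s : S) : R :=
  perf_from gamma (mp m) (mr m) (point_dist s) pi.

Definition Q (gamma : R) (m : model) (pi : policy) (s : S) (a : A) : R :=
  \sum_(s' : S) mp m s a s' * (mr m s a s' + gamma * V gamma m pi s').

Definition greedy_wrt (gamma : R) (m : model) (pi pi' : policy) : Prop :=
  forall s, exists a,
    (forall a', pi' s a' = if a' == a then 1 else 0) /\
    (forall a', Q gamma m pi s a' <= Q gamma m pi s a).

Definition rollout_policy (gamma : R) (m : model) (pib pir : policy) : Prop :=
  greedy_wrt gamma m pib pir.

Definition optimal_policy (gamma : R) (m : model) (pi : policy) : Prop :=
  valid_policy pi /\
  forall pi', valid_policy pi' -> forall s, V gamma m pi' s <= V gamma m pi s.

(* certainty-equivalence policy pi^ce_m: policy iteration run to convergence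
   from pi^b in m, i.e. a deterministic optimal policy of m *)
Definition ce_policy (gamma : R) (m : model) (pib pice : policy) : Prop :=
  optimal_policy gamma m pice /\
  (forall s, exists a, forall a', pice s a' = if a' == a then 1 else 0).

Definition PCM (gamma : R) (m mstar : model) (Pi : policy -> Prop) : Prop :=
  forall pii pij, Pi pii -> Pi pij ->
    J gamma m pij <= J gamma m pii -> J gamma mstar pii <= J gamma mstar pij.

Definition PRM (gamma : R) (m mstar : model) (Pi : policy -> Prop) : Prop :=
  forall pii pij, Pi pii -> Pi pij ->
    J gamma m pij <= J gamma m pii -> J gamma mstar pij <= J gamma mstar pii.

Definition PNM (gamma : R) (m mstar : model) (Pi : policy -> Prop) : Prop :=
  PCM gamma m mstar Pi /\
  forall pistar, optimal_policy gamma m pistar -> Pi pistar ->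
    forall pi, valid_policy pi -> J gamma mstar pistar <= J gamma mstar pi.

End MDP.

From mathcomp Require Import all_boot all_order all_algebra.
From mathcomp Require Import all_classical all_reals all_analysis.
Set Implicit Arguments. Unset Strict Implicit. Unset Printing Implicit Defensive.
Local Open Scope ring_scope.

Section Policies.
Variables (R : realType) (S A : finType).

Lemma deterministic_valid_policy (pi : policy R S A) :
  (forall s, exists a, forall a', pi s a' = if a' == a then 1 else 0) ->
  valid_policy pi.
Proof.
move=> det s; have [a pi_sE] := det s; split.
  by move=> a'; rewrite pi_sE; case: (a' == a).
under eq_bigr => a' _ do rewrite pi_sE.
by rewrite -big_mkcond /= big_pred1_eq.
Qed.

Lemma rollout_valid_policy (gamma : R) (m : model R S A) (pib pir : policy R S A) :
  rollout_policy gamma m pib pir -> valid_policy pir.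
Proof.
move=> greedy; apply: deterministic_valid_policy => s.
by have [a [pir_sE _]] := greedy s; exists a.
Qed.

Lemma PNM_optimal_minimizes (gamma : R) (m mstar : model R S A)
    (Pi : policy R S A -> Prop) (pistar pi : policy R S A) :
  PNM gamma m mstar Pi -> optimal_policy gamma m pistar -> Pi pistar ->
  valid_policy pi -> J gamma mstar pistar <= J gamma mstar pi.
Proof. by move=> [_ minimizes] opt Pi_pistar; exact: minimizes. Qed.

End Policies.

(* Only the PNM property of the second model matters: its CE policy is an
   optimal policy lying in the reference set, so it minimizes J in m* over all
   valid policies, and the rollout policy of the first model is one of them. *)
Theorem proposition3 (R : realType) (S A : finType) (gamma : R)
  (mstar mb mbb : model R S A) (pib : policy R S A)
  (pir_b pice_b pir_bb pice_bb : policy R S A) :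
  0 <= gamma < 1 ->
  valid_model mstar -> valid_model mb -> valid_model mbb ->
  valid_policy pib ->
  rollout_policy gamma mb pib pir_b -> ce_policy gamma mb pib pice_b ->
  rollout_policy gamma mbb pib pir_bb -> ce_policy gamma mbb pib pice_bb ->
  (PCM gamma mb mstar (fun pi => pi = pir_b \/ pi = pice_b) \/
   PRM gamma mb mstar (fun pi => pi = pir_b \/ pi = pice_b)) ->
  PNM gamma mbb mstar (fun pi => pi = pir_bb \/ pi = pice_bb) ->
  J gamma mstar pice_bb <= J gamma mstar pir_b.
Proof.
move=> _ _ _ _ _ rollout_b _ _ [pice_bb_opt _] _ pnm_bb.
apply: (PNM_optimal_minimizes pnm_bb pice_bb_opt); first by right.
exact: rollout_valid_policy rollout_b.
Qed.
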